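(* Let $\mu$ be an algebraically constant differential $3$-form on an $n$-dimensional manifold $M$ whose algebraic type has the following property: every element of the isotropy Lie algebra $\mathfrak{h}=\{A\in\mathfrak{gl}(V):A\mu=0\}$ (for $\mu$ viewed as a form on $V=T_xM$) is skew-adjoint relative to some pseudo-Euclidean inner product in $V$. Then the mapping $\nabla\mapsto\nabla\mu$, from the affine space of all torsion-free connections on $M$ to $(0,4)$ tensor fields, is injective; consequently, even locally, there exists at most one torsion-free connection $\nabla$ on $M$ with $\nabla\mu=0$.
   Context: A differential form is algebraically constant if it has the same algebraic type at all points. For $A\in\mathfrak{gl}(V)$ and an exterior $p$-form $\mu$, $A\mu$ is the derivation action $(A\mu)(v_1,\dots,v_p)=\sum_{i=1}^p\mu(v_1,\dots,Av_i,\dots,v_p)$; $\mathfrak{h}$ is the isotropy Lie algebra of $\mu$ for the natural action of $\mathrm{GL}(V)$. *)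

From HB Require Import structures.
From mathcomp Require Import all_boot all_order all_algebra.
From mathcomp Require Import all_classical all_reals all_analysis.
Set Implicit Arguments. Unset Strict Implicit. Unset Printing Implicit Defensive.
Import Order.TTheory GRing.Theory Num.Theory.
Import numFieldNormedType.Exports.
Local Open Scope ring_scope.
Local Open Scope classical_set_scope.

(* Coordinates: V = R^n with standard basis e_0..e_{n-1}.
   A (0,3) tensor on V is given by its components  t a b c = t(e_a,e_b,e_c). *)
Definition form3 (R : Type) (n : nat) := 'I_n -> 'I_n -> 'I_n -> R.

Definition alternating3 (R : ringType) (n : nat) (mu : form3 R n) : Prop :=
  (forall a b c, mu a b c = - mu b a c) /\
  (forall a b c, mu a b c = - mu a c b) /\
  (forall a b, mu a a b = 0) /\ (forall a b, mu a b b = 0).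

(* Derivation action of A in gl(V) (A e_j = sum_i A i j e_i):
   (A mu)(v1,v2,v3) = mu(A v1,v2,v3) + mu(v1,A v2,v3) + mu(v1,v2,A v3). *)
Definition gl_act (R : ringType) (n : nat) (A : 'M[R]_n) (mu : form3 R n)
  : form3 R n :=
  fun a b c => \sum_(m < n) (A m a * mu m b c + A m b * mu a m c + A m c * mu a b m).

Definition isotropy (R : ringType) (n : nat) (mu : form3 R n) : 'M[R]_n -> Prop :=
  fun A => gl_act A mu = (fun _ _ _ => 0).

Definition pseudo_euclidean (R : comUnitRingType) (n : nat) (G : 'M[R]_n) : Prop :=
  G^T = G /\ G \in unitmx.

(* A is skew-adjoint w.r.t. G : <Av,w> = - <v,Aw>, i.e. A^T G + G A = 0. *)
Definition skew_adjoint (R : ringType) (n : nat) (G A : 'M[R]_n) : Prop :=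
  A^T *m G + G *m A = 0.

Definition pullback3 (R : ringType) (n : nat) (P : 'M[R]_n) (mu0 : form3 R n)
  : form3 R n :=
  fun a b c => \sum_(i < n) \sum_(j < n) \sum_(k < n) P i a * P j b * P k c * mu0 i j k.

(* Same algebraic type: mu = g . mu0 for some g in GL(V). *)
Definition same_type (R : comUnitRingType) (n : nat) (mu mu0 : form3 R n) : Prop :=
  exists P : 'M[R]_n, P \in unitmx /\ mu = pullback3 P mu0.

Definition basis_vec (R : ringType) (n : nat) (l : 'I_n) : 'rV[R]_n :=
  delta_mx 0 l.

(* A connection on the open set U of R^n (a coordinate chart), given by its
   Christoffel symbols: nabla_{e_i} e_j = sum_k Gam x k i j e_k. *)
Definition connection (R : Type) (n : nat) := 'rV[R]_n -> 'I_n -> 'I_n -> 'I_n -> R.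

Definition torsion_free (R : Type) (n : nat) (U : set 'rV[R]_n) (Gam : connection R n)
  : Prop := forall x, U x -> forall k i j, Gam x k i j = Gam x k j i.

Definition cov_deriv (R : realType) (n : nat) (Gam : connection R n)
  (mu : 'rV[R]_n -> form3 R n) (x : 'rV[R]_n) : 'I_n -> form3 R n :=
  fun l a b c =>
    'D_(basis_vec R l) (fun y => mu y a b c) x
    - \sum_(m < n) (Gam x m l a * mu x m b c + Gam x m l b * mu x a m c
                    + Gam x m l c * mu x a b m).

From HB Require Import structures.
From mathcomp Require Import all_boot all_order all_algebra.
From mathcomp Require Import all_classical all_reals all_analysis.
From mathcomp Require Import ring.
Import Order.TTheory GRing.Theory Num.Theory.
Import numFieldNormedType.Exports.
Local Open Scope ring_scope.
Local Open Scope classical_set_scope.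
Set Implicit Arguments. Unset Strict Implicit. Unset Printing Implicit Defensive.

(* At a point x, two torsion-free connections with the same [nabla mu] differ
   by a tensor D such that every D(e_l) lies in the isotropy algebra of mu(x)
   and D(e_l) e_a = D(e_a) e_l.  As mu(x) = P^* mu0, that isotropy algebra is
   conjugate by P to the one of mu0, so it consists of maps skew-adjoint for
   the pseudo-Euclidean product P^T G P.  The form g(e_a, D(e_l) e_b) is then
   skew in (a, b) and symmetric in (l, b), which forces it to vanish (the
   argument behind the uniqueness of the Levi-Civita connection); since g is
   nondegenerate, D = 0. *)

Definition pseudo_orthogonal_isotropy (R : comUnitRingType) (n : nat)
    (t : form3 R n) : Prop :=
  exists G : 'M[R]_n, pseudo_euclidean G /\
    forall A : 'M[R]_n, isotropy t A -> skew_adjoint G A.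

Ltac form3_ext := apply/funext => a; apply/funext => b; apply/funext => c.

Section Precomposition.

Variables (R : comRingType) (n : nat).
Implicit Types (M N A B P Q : 'M[R]_n) (t : form3 R n).

Definition precomp1 M t : form3 R n := fun a b c => \sum_i M i a * t i b c.
Definition precomp2 M t : form3 R n := fun a b c => \sum_i M i b * t a i c.
Definition precomp3 M t : form3 R n := fun a b c => \sum_i M i c * t a b i.

Lemma sum_mul_mulmx M N (f : 'I_n -> R) a :
  \sum_i M i a * \sum_j N j i * f j = \sum_j (N *m M) j a * f j.
Proof.
under eq_bigr do rewrite big_distrr; rewrite exchange_big.
apply: eq_bigr => j _; rewrite !mxE big_distrl; apply: eq_bigr => i _ /=.
by rewrite mulrCA mulrA.
Qed.

Lemma sum_mul_mx1 (f : 'I_n -> R) a : \sum_i (1%:M : 'M[R]_n) i a * f i = f a.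
Proof.
rewrite (bigD1 a) //= mxE eqxx mul1r big1 ?addr0 // => i /negbTE neq_ia.
by rewrite mxE neq_ia mul0r.
Qed.

Lemma sum_mul_comm M N (f : 'I_n -> 'I_n -> R) a b :
  \sum_i M i a * \sum_j N j b * f i j = \sum_j N j b * \sum_i M i a * f i j.
Proof.
under eq_bigr do rewrite big_distrr; rewrite exchange_big.
by apply: eq_bigr => j _; rewrite big_distrr; apply: eq_bigr => i _ /=; rewrite mulrCA.
Qed.

Lemma precomp1M M N t : precomp1 M (precomp1 N t) = precomp1 (N *m M) t.
Proof. by form3_ext; apply: sum_mul_mulmx. Qed.

Lemma precomp2M M N t : precomp2 M (precomp2 N t) = precomp2 (N *m M) t.
Proof. by form3_ext; apply: sum_mul_mulmx. Qed.

Lemma precomp3M M N t : precomp3 M (precomp3 N t) = precomp3 (N *m M) t.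
Proof. by form3_ext; apply: sum_mul_mulmx. Qed.

Lemma precomp12C M N t : precomp1 M (precomp2 N t) = precomp2 N (precomp1 M t).
Proof. by form3_ext; apply: sum_mul_comm. Qed.

Lemma precomp13C M N t : precomp1 M (precomp3 N t) = precomp3 N (precomp1 M t).
Proof. by form3_ext; apply: sum_mul_comm. Qed.

Lemma precomp23C M N t : precomp2 M (precomp3 N t) = precomp3 N (precomp2 M t).
Proof. by form3_ext; apply: sum_mul_comm. Qed.

Lemma pullback3E P t : pullback3 P t = precomp1 P (precomp2 P (precomp3 P t)).
Proof.
form3_ext; apply: eq_bigr => i _; rewrite big_distrr; apply: eq_bigr => j _ /=.
by rewrite !big_distrr; apply: eq_bigr => k _ /=; rewrite !mulrA.
Qed.

Lemma gl_actE A t : gl_act A t = precomp1 A t + precomp2 A t + precomp3 A t.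
Proof. by form3_ext; rewrite /gl_act !big_split. Qed.

Lemma gl_actBl A B t : gl_act (A - B) t = gl_act A t - gl_act B t.
Proof.
form3_ext; rewrite !fctE /gl_act -sumrB; apply: eq_bigr => m _; rewrite !mxE; ring.
Qed.

Lemma pullback3D P t1 t2 : pullback3 P (t1 + t2) = pullback3 P t1 + pullback3 P t2.
Proof.
form3_ext; rewrite !fctE /pullback3 -big_split; apply: eq_bigr => i _.
rewrite -big_split; apply: eq_bigr => j _; rewrite -big_split.
by apply: eq_bigr => k _; rewrite mulrDr.
Qed.

Lemma pullback30 P : pullback3 P 0 = 0.
Proof.
form3_ext; apply: big1 => i _; apply: big1 => j _; apply: big1 => k _.
exact: mulr0.
Qed.

Lemma pullback3_1 t : pullback3 1%:M t = t.
Proof.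
rewrite pullback3E; form3_ext.
by rewrite /precomp1 sum_mul_mx1 /precomp2 sum_mul_mx1 /precomp3 sum_mul_mx1.
Qed.

Lemma pullback3M P Q t : pullback3 Q (pullback3 P t) = pullback3 (P *m Q) t.
Proof.
rewrite !pullback3E -precomp13C -precomp23C precomp3M.
by rewrite -precomp12C precomp2M precomp1M.
Qed.

Lemma gl_act_pullback3 A B P t : B *m P = P *m A ->
  gl_act A (pullback3 P t) = pullback3 P (gl_act B t).
Proof.
move=> BP; rewrite !gl_actE !pullback3D !pullback3E.
congr (_ + _ + _).
- by rewrite precomp1M -BP -precomp1M precomp12C precomp13C.
- by rewrite -precomp12C precomp2M -BP -precomp2M precomp23C.
- by rewrite -precomp13C -precomp23C precomp3M -BP -precomp3M.
Qed.

Lemma skew_adjoint_conj G A B P : B *m P = P *m A ->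
  skew_adjoint G B -> skew_adjoint (P^T *m G *m P) A.
Proof.
rewrite /skew_adjoint => BP skewB.
have -> : A^T *m (P^T *m G *m P) = P^T *m (B^T *m G) *m P.
  by rewrite !mulmxA -trmx_mul -BP trmx_mul.
have -> : P^T *m G *m P *m A = P^T *m (G *m B) *m P by rewrite -!mulmxA BP.
by rewrite -mulmxDl -mulmxDr skewB mulmx0 mul0mx.
Qed.

End Precomposition.

Section AlgebraicType.

Variables (R : comUnitRingType) (n : nat).
Implicit Types (A P G : 'M[R]_n) (t : form3 R n).

Lemma isotropy_pullback3 P A t : P \in unitmx ->
  isotropy (pullback3 P t) A -> isotropy t (P *m A *m invmx P).
Proof.
rewrite /isotropy => unitP isoA; set B := P *m A *m invmx P.
have BP : B *m P = P *m A by rewrite mulmxKV.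
rewrite -[gl_act B t]pullback3_1 -(mulmxV unitP) -pullback3M.
by rewrite -(gl_act_pullback3 _ BP) isoA pullback30.
Qed.

Lemma pseudo_euclidean_conj G P : P \in unitmx ->
  pseudo_euclidean G -> pseudo_euclidean (P^T *m G *m P).
Proof.
move=> unitP [symG unitG]; split; first by rewrite !trmx_mul symG trmxK mulmxA.
by rewrite !unitmx_mul unitmx_tr unitP unitG.
Qed.

Lemma pseudo_orthogonal_isotropy_same_type t t0 :
  same_type t t0 -> pseudo_orthogonal_isotropy t0 -> pseudo_orthogonal_isotropy t.
Proof.
move=> [P [unitP ->]] [G [peG skewG]].
exists (P^T *m G *m P); split; first exact: pseudo_euclidean_conj.
move=> A isoA; apply: (@skew_adjoint_conj _ _ _ _ (P *m A *m invmx P)).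
  by rewrite mulmxKV.
exact/skewG/isotropy_pullback3.
Qed.

End AlgebraicType.

Lemma sym_skew3_eq0 (R : numDomainType) (I : Type) (S : I -> I -> I -> R) :
  (forall l a b, S l a b = - S l b a) -> (forall l a b, S l a b = S b a l) ->
  forall l a b, S l a b = 0.
Proof.
move=> skewS symS l a b.
have S_opp : S l a b = - S l a b by rewrite {1}skewS symS skewS opprK symS skewS symS.
by apply/eqP; rewrite -[_ == 0](mulrn_eq0 _ 2) mulr2n {2}S_opp subrr.
Qed.

Lemma sym_skew_adjoint_eq0 (R : numFieldType) (n : nat) (G : 'M[R]_n)
    (D : 'I_n -> 'M[R]_n) :
  pseudo_euclidean G -> (forall l, skew_adjoint G (D l)) ->
  (forall l m a, D l m a = D a m l) -> forall l, D l = 0.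
Proof.
move=> [symG unitG] skewD symD.
have symGE i j : G i j = G j i by rewrite -{1}symG mxE.
pose S l a b := (G *m D l) a b.
have skewS l a b : S l a b = - S l b a.
  have := congr1 (fun M : 'M[R]_n => M a b) (skewD l).
  rewrite /S !mxE => /eqP; rewrite addrC addr_eq0 => /eqP ->.
  by congr (- _); apply: eq_bigr => j _; rewrite mxE mulrC symGE.
have symS l a b : S l a b = S b a l.
  by rewrite /S !mxE; apply: eq_bigr => m _; rewrite symD.
move=> l; have GD0 : G *m D l = 0.
  by apply/matrixP => a b; rewrite [RHS]mxE; apply: (sym_skew3_eq0 skewS symS).
by rewrite -[D l](mulKmx unitG) GD0 mulmx0.
Qed.

Definition christoffel (R : Type) (n : nat) (Gam : connection R n) x l : 'M[R]_n :=
  \matrix_(m, a) Gam x m l a.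

Lemma cov_derivE (R : realType) (n : nat) (Gam : connection R n) mu x l :
  cov_deriv Gam mu x l =
  (fun a b c => 'D_(basis_vec R l) (fun y => mu y a b c) x)
    - gl_act (christoffel Gam x l) (mu x).
Proof.
by form3_ext; rewrite !fctE /cov_deriv /gl_act; congr (_ - _); apply: eq_bigr => m _; rewrite !mxE.
Qed.

Lemma isotropy_christoffelB (R : realType) (n : nat) (Gam1 Gam2 : connection R n)
    mu x l :
  cov_deriv Gam1 mu x = cov_deriv Gam2 mu x ->
  isotropy (mu x) (christoffel Gam1 x l - christoffel Gam2 x l).
Proof.
move=> /(congr1 (fun f => f l)); rewrite !cov_derivE => /addrI /oppr_inj eq_gl.
by rewrite /isotropy gl_actBl eq_gl subrr.
Qed.

Lemma christoffel_inj (R : Type) (n : nat) (Gam1 Gam2 : connection R n) x :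
  (forall l, christoffel Gam1 x l = christoffel Gam2 x l) -> Gam1 x = Gam2 x.
Proof.
move=> eqG; form3_ext.
by have := congr1 (fun M : 'M[R]_n => M a c) (eqG b); rewrite !mxE.
Qed.

Theorem lemma12p1 (R : realType) (n : nat) (U : set 'rV[R]_n)
  (mu : 'rV[R]_n -> form3 R n) (mu0 : form3 R n) :
  open U ->
  alternating3 mu0 ->
  (* algebraically constant, of the algebraic type of mu0 *)
  (forall x, U x -> same_type (mu x) mu0) ->
  (* the isotropy algebra of the type consists of skew-adjoint maps
     for some pseudo-Euclidean inner product *)
  (exists G : 'M[R]_n, pseudo_euclidean G /\
     forall A : 'M[R]_n, isotropy mu0 A -> skew_adjoint G A) ->
  (* injectivity of nabla |-> nabla mu on torsion-free connections *)
  (forall Gam1 Gam2 : connection R n,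
     torsion_free U Gam1 -> torsion_free U Gam2 ->
     (forall x, U x -> cov_deriv Gam1 mu x = cov_deriv Gam2 mu x) ->
     forall x, U x -> Gam1 x = Gam2 x)
  /\
  (* hence at most one torsion-free connection with nabla mu = 0 *)
  (forall Gam1 Gam2 : connection R n,
     torsion_free U Gam1 -> torsion_free U Gam2 ->
     (forall x, U x -> cov_deriv Gam1 mu x = (fun _ _ _ _ => 0)) ->
     (forall x, U x -> cov_deriv Gam2 mu x = (fun _ _ _ _ => 0)) ->
     forall x, U x -> Gam1 x = Gam2 x).
Proof.
move=> _ _ type_mu isotropy_mu0.
have nabla_inj Gam1 Gam2 : torsion_free U Gam1 -> torsion_free U Gam2 ->
    (forall x, U x -> cov_deriv Gam1 mu x = cov_deriv Gam2 mu x) ->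
    forall x, U x -> Gam1 x = Gam2 x.
  move=> tf1 tf2 eq_nabla x Ux; apply: christoffel_inj => l; apply/subr0_eq.
  have [G [peG skewG]] :=
    pseudo_orthogonal_isotropy_same_type (type_mu x Ux) isotropy_mu0.
  move: l; apply: (sym_skew_adjoint_eq0 peG).
    by move=> l; apply/skewG/isotropy_christoffelB/eq_nabla.
  by move=> l m a; rewrite /christoffel !mxE tf1 // tf2.
split; first exact: nabla_inj.
move=> Gam1 Gam2 tf1 tf2 flat1 flat2.
by apply: nabla_inj => // x Ux; rewrite flat1 ?flat2.
Qed.
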